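(* Let $T$ be a string and $T'$ be obtained from $T$ by a single character edit (insertion, substitution, or deletion) at position $i$. Then every string $x\in \mathcal{N}_1\cup\mathcal{N}_3^{\neg\mathrm{v}}$ occurs in $T$ (i.e. $x\in\mathrm{Substr}(T)$).
   Context: Strings are over an alphabet $\Sigma$; $\mathrm{Substr}(T)$, $\mathrm{Prefix}(T)$, $\mathrm{Suffix}(T)$ are the sets of substrings, prefixes, suffixes of $T$. A string $w\in\mathrm{Substr}(T)$ is left-maximal in $T$ if $w\in\mathrm{Prefix}(T)$ or there exist distinct $a,b\in\Sigma$ with $aw,bw\in\mathrm{Substr}(T)$; right-maximal if $w\in\mathrm{Suffix}(T)$ or there exist distinct $a,b$ with $wa,wb\in\mathrm{Substr}(T)$. $\mathsf{LeftM}(T)$, $\mathsf{RightM}(T)$ denote these sets and $\mathsf{M}(T)=\mathsf{LeftM}(T)\cap\mathsf{RightM}(T)$. Edit setting: $|T|=n$. Insertion: $|T'|=n+1$, $T'[1..i-1]=T[1..i-1]$, $T'[i]$ is the inserted character, $T'[i+1..n+1]=T[i..n]$. Substitution: $|T'|=n$, $T'[i]\ne T[i]$, $T'[j]=T[j]$ for $j\neq i$. Deletion: $T'=T[1..i-1]T[i+1..n]$ (position $i$ of $T'$ is the edited position). A crossing occurrence of a nonempty string $x$ is an occurrence $T'[j..k]=x$ such that, for insertion/substitution, $k=i-1$, or $j\le i\le k$, or $j=i+1$; and for deletion, $k=i-1$, or ($j\le i-1$ and $i\le k$), or $j=i$. $x$ is of Type (v) if (1) $x$ has at least two crossing occurrences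 in $T'$, and (2) if all occurrences of $x$ in $T'$ are crossing occurrences then $x\in\mathsf{M}(T')$. Let $\mathcal{N}=(\mathsf{M}(T')\setminus\mathsf{M}(T))\setminus\{T'\}$, $\mathcal{N}_1=\mathcal{N}\cap\mathsf{RightM}(T)$, $\mathcal{N}_2=\mathcal{N}\cap\mathsf{LeftM}(T)$, $\mathcal{N}_3=\mathcal{N}\setminus(\mathcal{N}_1\cup\mathcal{N}_2)$. Let $\mathcal{N}_3^{\mathrm{v}}$ be the set of $x\in\mathcal{N}_3$ such that $x$ is of Type (v) and every character $a$ with $xa\in\mathrm{Substr}(T')$ is the character immediately following some crossing occurrence of $x$ in $T'$; let $\mathcal{N}_3^{\neg\mathrm{v}}=\mathcal{N}_3\setminus\mathcal{N}_3^{\mathrm{v}}$. *)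

From mathcomp Require Import all_boot.
Set Implicit Arguments. Unset Strict Implicit. Unset Printing Implicit Defensive.

Section Strings.
Variable A : eqType.
Implicit Types (T w x : seq A).

(* Substr(T), Prefix(T), Suffix(T): mathcomp's [infix], [prefix], [suffix]. *)
Definition substr T w : Prop := infix w T.

Definition leftM T w : Prop :=
  infix w T /\ (prefix w T \/ exists a b : A, a != b /\ infix (a :: w) T /\ infix (b :: w) T).

Definition rightM T w : Prop :=
  infix w T /\ (suffix w T \/ exists a b : A, a != b /\ infix (rcons w a) T /\ infix (rcons w b) T).

Definition maxM T w : Prop := leftM T w /\ rightM T w.

(* Single character edits; positions are 1-based as in the paper. *)
Inductive edit_op := Ins of A | Subst of A | Del.

Definition is_edit (op : edit_op) T T' (i : nat) : Prop :=
  match op with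
  | Ins c => 1 <= i <= (size T).+1 /\ T' = take i.-1 T ++ c :: drop i.-1 T
  | Subst c => 1 <= i <= size T /\ c != nth c T i.-1 /\ T' = take i.-1 T ++ c :: drop i T
  | Del => 1 <= i <= size T /\ T' = take i.-1 T ++ drop i T
  end.

(* T'[j..k] = x, 1-based, 1 <= j <= k <= |T'| *)
Definition occ T' x (j k : nat) : Prop :=
  [/\ 1 <= j, j <= k, k <= size T' & drop j.-1 (take k T') = x].

Definition crossing_pos (op : edit_op) (i j k : nat) : Prop :=
  match op with
  | Del => k = i.-1 \/ (j <= i.-1 /\ i <= k) \/ j = i
  | _ => k = i.-1 \/ (j <= i <= k) \/ j = i.+1
  end.

Definition crossing_occ op T' i x j k : Prop := occ T' x j k /\ crossing_pos op i j k.

Definition typeV op T' i x : Prop :=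
  (exists j k j' k', crossing_occ op T' i x j k /\ crossing_occ op T' i x j' k' /\ (j, k) <> (j', k'))
  /\ ((forall j k, occ T' x j k -> crossing_pos op i j k) -> maxM T' x).

Definition inN T T' x : Prop := maxM T' x /\ ~ maxM T x /\ x <> T'.
Definition inN1 T T' x : Prop := inN T T' x /\ rightM T x.
Definition inN2 T T' x : Prop := inN T T' x /\ leftM T x.
Definition inN3 T T' x : Prop := inN T T' x /\ ~ inN1 T T' x /\ ~ inN2 T T' x.

(* T'[k+1] (1-based) is nth _ T' k *)
Definition inN3v op T T' i x : Prop :=
  inN3 T T' x /\ typeV op T' i x /\
  (forall a : A, infix (rcons x a) T' ->
     exists j k, crossing_occ op T' i x j k /\ k < size T' /\ nth a T' k = a).

Definition inN3notv op T T' i x : Prop := inN3 T T' x /\ ~ inN3v op T T' i x.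

End Strings.

(* Strings of N_1 are right-maximal in T, hence occur in T.  For x in N_3 the
   point is that T and T' agree outside the edited window, so if x does not occur
   in T then every occurrence of x in T' meets the window, i.e. is crossing.  Being
   maximal in T' and different from T', x has two distinct occurrences there (from
   two distinct extension letters on one side, or else as both a prefix and a
   suffix of T'), and every letter following x in T' follows some occurrence.  So
   x would be in N_3^v. *)

From mathcomp Require Import all_boot zify.

Set Implicit Arguments.
Unset Strict Implicit.
Unset Printing Implicit Defensive.

Section Occurrences.
Variable A : eqType.
Implicit Types (s p q x P m S : seq A).

Definition two_occs s x : Prop :=
  exists j k j' k', occ s x j k /\ occ s x j' k' /\ (j, k) <> (j', k').

Lemma occ_cat s p x q : s = p ++ x ++ q -> x != [::] ->
  occ s x (size p).+1 (size p + size x).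
Proof.
move=> -> x_nil; have x_pos : 0 < size x by case: x x_nil.
split=> //; first lia; first by rewrite !size_cat; lia.
by rewrite /= catA take_size_cat ?size_cat // drop_size_cat.
Qed.

Lemma occ_infix_cons a s x : infix (a :: x) s -> x != [::] ->
  exists n, [/\ occ s x n.+2 (n.+1 + size x), n < size s & nth a s n = a].
Proof.
case/infixP=> p [q def_s] x_nil; exists (size p).
have o : occ s x (size (rcons p a)).+1 (size (rcons p a) + size x).
  by apply: occ_cat x_nil; rewrite def_s cat_rcons.
rewrite size_rcons in o; split=> //; first by rewrite def_s size_cat /=; lia.
by rewrite def_s nth_cat ltnn subnn.
Qed.

Lemma occ_infix_rcons a s x : infix (rcons x a) s -> x != [::] ->
  exists n, [/\ occ s x n.+1 (n + size x), n + size x < size s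
              & nth a s (n + size x) = a].
Proof.
case/infixP=> p [q def_s] x_nil; exists (size p); rewrite def_s cat_rcons.
split; first exact: occ_cat.
  by rewrite !size_cat /=; lia.
by rewrite catA nth_cat size_cat ltnn subnn.
Qed.

Lemma leftM_occs s x : x != [::] -> leftM s x -> occ s x 1 (size x) \/ two_occs s x.
Proof.
move=> x_nil [_ [/prefixP[q def_s] | [a [b [neq_ab [ax bx]]]]]].
  by left; apply: (occ_cat (p := [::])) def_s x_nil.
right; have [n [o_n lt_n nth_a]] := occ_infix_cons ax x_nil.
have [n' [o_n' _ nth_b]] := occ_infix_cons bx x_nil.
exists n.+2, (n.+1 + size x), n'.+2, (n'.+1 + size x); do 2!split=> //.
case=> eq_n _; move: neq_ab; rewrite -nth_a -nth_b eq_n.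
by rewrite (set_nth_default b) -?eq_n // eqxx.
Qed.

Lemma rightM_occs s x : x != [::] -> rightM s x ->
  occ s x (size s - size x).+1 (size s) \/ two_occs s x.
Proof.
move=> x_nil [_ [/suffixP[p def_s] | [a [b [neq_ab [xa xb]]]]]].
  left; have -> : size s - size x = size p by rewrite def_s size_cat addnK.
  by rewrite {2}def_s size_cat; apply: (occ_cat (q := [::])); rewrite ?cats0.
right; have [n [o_n lt_n nth_a]] := occ_infix_rcons xa x_nil.
have [n' [o_n' _ nth_b]] := occ_infix_rcons xb x_nil.
exists n.+1, (n + size x), n'.+1, (n' + size x); do 2!split=> //.
case=> eq_n _; move: neq_ab; rewrite -nth_a -nth_b eq_n.
by rewrite (set_nth_default b) -?eq_n // eqxx.
Qed.

Lemma maxM_two_occs s x : x != [::] -> x <> s -> maxM s x -> two_occs s x.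
Proof.
move=> x_nil neq_xs [/(leftM_occs x_nil) [o_pre|] //] /(rightM_occs x_nil) [o_suf|] //.
exists 1, (size x), (size s - size x).+1, (size s); do 2!split=> //.
case=> _ eq_size; apply: neq_xs; case: o_pre => _ _ _.
by rewrite drop0 eq_size take_size.
Qed.

Lemma occ_infix_take s x j k : occ s x j k -> infix x (take k s).
Proof. by case=> _ _ _ <-; apply: infix_drop. Qed.

Lemma occ_infix_drop s x j k : occ s x j k -> infix x (drop j.-1 s).
Proof.
case=> _ le_jk _ <-; rewrite -(@subnK j.-1 k) -?take_drop; first exact: infix_take.
by apply: leq_trans le_jk; apply: leq_pred.
Qed.

Lemma infix_occ_outside P m (m' : seq A) S x j k : occ (P ++ m' ++ S) x j k ->
  k <= size P \/ size P + size m' <= j.-1 -> infix x (P ++ m ++ S).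
Proof.
move=> o_x [le_k | ge_j].
  move: (occ_infix_take o_x); rewrite takel_cat // => /infix_trans; apply.
  exact: infix_catr (infix_take _ _).
move: (occ_infix_drop o_x); rewrite catA drop_cat size_cat ltnNge ge_j /=.
move=> /infix_trans; apply; rewrite catA; exact: infix_catl (infix_drop _ _).
Qed.

End Occurrences.

Section Edits.
Variable A : eqType.
Implicit Types (T x : seq A) (op : edit_op A).

Definition inserted_size op : nat := if op is Del then 0 else 1.

Lemma cat_take_drop_pred i T : 0 < i ->
  T = take i.-1 T ++ take 1 (drop i.-1 T) ++ drop i T.
Proof.
move=> i_pos; rewrite -{1}(cat_take_drop i.-1 T) -{1}(cat_take_drop 1 (drop i.-1 T)).
by rewrite drop_drop add1n prednK.
Qed.

Lemma is_edit_window op T T' i : is_edit op T T' i ->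
  exists P m m' S, [/\ T = P ++ m ++ S, T' = P ++ m' ++ S,
                       size P = i.-1 & size m' = inserted_size op].
Proof.
case: op => [c|c|] /= [/andP[i_pos le_i]].
- move=> ->; exists (take i.-1 T), [::], [:: c], (drop i.-1 T).
  by rewrite cat_take_drop size_takel //; lia.
- case=> _ ->; exists (take i.-1 T), (take 1 (drop i.-1 T)), [:: c], (drop i T).
  by rewrite -cat_take_drop_pred // size_takel //; lia.
- move=> ->; exists (take i.-1 T), (take 1 (drop i.-1 T)), [::], (drop i T).
  by rewrite -cat_take_drop_pred // size_takel //; lia.
Qed.

Lemma crossing_pos_overlap op i j k : 0 < i -> j <= k ->
  i.-1 < k -> j.-1 < i.-1 + inserted_size op -> crossing_pos op i j k.
Proof. by case: op => [c|c|] /=; lia. Qed.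

Lemma occ_crossing_of_not_infix op T T' i x j k : is_edit op T T' i ->
  ~~ infix x T -> occ T' x j k -> crossing_pos op i j k.
Proof.
move=> edit_T x_notin o_x.
have i_pos : 0 < i by case: op edit_T => [c|c|] /= [/andP[]].
have [P [m [m' [S [def_T def_T' size_P size_m']]]]] := is_edit_window edit_T.
have outside_T : k <= size P \/ size P + size m' <= j.-1 -> infix x T.
  by rewrite def_T; apply: infix_occ_outside; rewrite -def_T'.
apply: crossing_pos_overlap => //; first by case: o_x.
  by rewrite ltnNge -size_P; apply: contra x_notin => le_k; apply: outside_T; left.
by rewrite ltnNge -size_P -size_m'; apply: contra x_notin => ge_j; apply: outside_T; right.
Qed.

Lemma inN3v_of_not_infix op T T' i x : is_edit op T T' i ->
  inN3 T T' x -> ~~ infix x T -> inN3v op T T' i x.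
Proof.
move=> edit_T N3_x x_notin; have [[max_x [_ neq_x]] _] := N3_x.
have crossing o_x := occ_crossing_of_not_infix edit_T x_notin o_x.
have x_nil : x != [::] by apply: contraNneq x_notin => ->; apply: infix0s.
split=> //; split.
  split; last by move=> _.
  have [j [k [j' [k' [o_x [o_x' neq]]]]]] := maxM_two_occs x_nil neq_x max_x.
  by exists j, k, j', k'; do !split=> //; apply: crossing.
move=> a /occ_infix_rcons /(_ x_nil) [n [o_x lt_n nth_a]].
by exists n.+1, (n + size x); do !split=> //; apply: crossing.
Qed.

End Edits.

Theorem lemma1 (A : eqType) (op : edit_op A) (T T' : seq A) (i : nat) :
  is_edit op T T' i ->
  forall x : seq A, inN1 T T' x \/ inN3notv op T T' i x -> substr T x.
Proof.
move=> edit_T x [[_ [x_in _]] // | [N3_x not_N3v_x]].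
apply/idPn => x_notin; apply: not_N3v_x.
exact: inN3v_of_not_infix.
Qed.
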